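(* Let $\alpha\in(0,1)$, $k\ge1$ an integer, and $c=-\frac12\log\alpha$. Suppose $z_i\sim\mathcal N(\mu_i,2\mu_i)$ for $i=1,2,\dots$ with $0\le\mu_i\le\frac{-k\log\alpha}{2(k+i)}$ (where $\mathcal N(0,0)$ is the point mass at $0$). Then $$\mathbb E\,\#\{i\ge1:|z_i|>c\}\ \le\ C_3(\alpha)\,k,\qquad C_3(\alpha)=\int_0^\infty\Big[\Phi\Big(\tfrac{-(2+t)\sqrt c}{\sqrt{2+2t}}\Big)+1-\Phi\Big(\tfrac{t\sqrt c}{\sqrt{2+2t}}\Big)\Big]dt<\infty,$$ where $\Phi$ is the standard normal distribution function. *)

From HB Require Import structures.
From mathcomp Require Import all_boot all_order all_algebra.
From mathcomp Require Import all_classical all_reals all_analysis.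
Set Implicit Arguments. Unset Strict Implicit. Unset Printing Implicit Defensive.
Import Order.TTheory GRing.Theory Num.Theory.
Import numFieldNormedType.Exports.
Local Open Scope classical_set_scope.
Local Open Scope ring_scope.

(* N(m, v): normal law with mean m and variance v >= 0, where N(m,0) is the
   point mass at m (the library's normal_prob uses the standard deviation,
   and gives a different convention for s = 0, hence this wrapper). *)
Definition gauss_law {R : realType} (m v : R) : set R -> \bar R :=
  if v == 0 then (fun A => (\1_A m)%:E) else normal_prob m (Num.sqrt v).

Definition Phi {R : realType} (x : R) : R :=
  fine (normal_prob 0 1 `]-oo, x]%classic).

Definition C3 {R : realType} (alpha : R) : \bar R :=
  let c := - (1/2) * ln alpha in
  (\int[lebesgue_measure]_(t in `[0%R, +oo[%classic)
     (Phi (- (2 + t) * Num.sqrt c / Num.sqrt (2 + 2 * t))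
      + 1 - Phi (t * Num.sqrt c / Num.sqrt (2 + 2 * t)))%R%:E)%E.

(* A Gaussian N(m, 2 m) exceeds c in absolute value with probability at most
   Phi ((- c - m) / sqrt (2 m)) + 1 - Phi ((c - m) / sqrt (2 m)), and for
   m <= c / (1 + t) this is at most its value at m = c / (1 + t), which is the
   integrand of C3 at t. The hypothesis on mu_i gives mu_i (1 + t) <= c whenever
   t k <= i, so the i-th probability is at most the integrand on
   [(i - 1) / k, i / k[; summing over i, the expected count is at most k C3.
   Finally C3 is finite: comparing the N(0, 1) and N(0, 2) densities bounds both
   Gaussian tails in the integrand by a multiple of exp (- c t / 8). *)

From HB Require Import structures.
From mathcomp Require Import all_boot all_order all_algebra.
From mathcomp Require Import all_classical all_reals all_analysis.
From mathcomp Require Import ring lra measurable_realfun.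
Import Order.TTheory GRing.Theory Num.Theory.
Import numFieldNormedType.Exports.
Local Open Scope classical_set_scope.
Local Open Scope ring_scope.

Section standard_normal.
Context {R : realType}.

Lemma normal_pdf_scale (m s y : R) : 0 < s ->
  normal_pdf m s y = normal_pdf 0 1 ((y - m) / s) / s.
Proof.
move=> s0; rewrite !normal_pdfE ?gt_eqF// /normal_peak /normal_fun.
rewrite expr1n mul1r subr0 -!mulrnAr sqrtrM ?sqr_ge0// sqrtr_sqr gtr0_norm//.
have -> : - ((y - m) / s) ^+ 2 / (1 *+ 2) = - (y - m) ^+ 2 / (s * (s *+ 2)).
  by field; rewrite gt_eqF.
by field; rewrite !gt_eqF// sqrtr_gt0 pmulrn_lgt0// pi_gt0.
Qed.

Lemma normal_prob_itvNy (m s x : R) : 0 < s ->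
  normal_prob m s `]-oo, x] = normal_prob 0 1 `]-oo, (x - m) / s].
Proof.
move=> s0; pose F y := (y - m) / s.
have F'E : F^`()%classic = cst s^-1.
  apply/funext => y; rewrite /F derive1E deriveM// deriveD// derive_cst scaler0.
  by rewrite add0r derive_id derive_cst addr0 scaler1.
rewrite /normal_prob -/(F x).
rewrite (@increasing_ge0_integration_by_substitutionNy _ F (normal_pdf 0 1) x).
- by apply: eq_integral => y _; rewrite F'E /= (normal_pdf_scale _ _ _ s0).
- by move=> a b _ _ ab; rewrite /F ltr_pM2r ?invr_gt0// ltrBlDr subrK.
- by rewrite F'E => ? _; exact: cst_continuous.
- by rewrite F'E; exact: is_cvg_cst.
- by rewrite F'E; exact: cvg_cst.
- split; first by move=> y _; apply: derivableM => //; apply: derivableD.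
  apply: cvg_at_left_filter; apply: cvgM; last exact: cvg_cst.
  by apply: cvgB; [exact: cvg_id | exact: cvg_cst].
- by apply: gt0_cvgMlNy; [rewrite invr_gt0 | exact: cvg_addrr_Ny].
- by apply: continuous_subspaceT => y; exact/continuous_normal_pdf/oner_neq0.
- by move=> y _; exact: normal_pdf_ge0.
Qed.

Lemma PhiE (x : R) : normal_prob 0 1 `]-oo, x] = (Phi x)%:E.
Proof. by rewrite fineK// fin_num_measure. Qed.

Lemma Phi_ge0 (x : R) : 0 <= Phi x.
Proof. by rewrite -lee_fin -PhiE. Qed.

Lemma Phi_le1 (x : R) : Phi x <= 1.
Proof. by rewrite -lee_fin -PhiE probability_le1. Qed.

Lemma Phi_nondecreasing : nondecreasing_fun (@Phi R).
Proof.
move=> x y xy; rewrite -lee_fin -!PhiE; apply: le_measure; rewrite ?inE//.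
by apply: subitvP; rewrite subitvE /= bnd_simp.
Qed.

Lemma normal_prob_itvy (m s x : R) :
  normal_prob m s `]x, +oo[ = (1 - normal_prob m s `]-oo, x])%E.
Proof. by rewrite -setCitvl probability_setC. Qed.

Lemma abs_gt_itvU (c : R) :
  [set x : R | c < `|x|] = `]-oo, - c[ `|` `]c, +oo[.
Proof.
apply/seteqP; split => x /=; rewrite !in_itv/= ?andbT ltr_normr.
  by case/orP => h; [right | left; rewrite ltrNr].
by case => h; apply/orP; [right; rewrite ltrNr | left].
Qed.

Lemma measurable_abs_gt (c : R) : measurable [set x : R | c < `|x|].
Proof. by rewrite abs_gt_itvU; exact: measurableU. Qed.

Lemma normal_prob_abs_gt (m s c : R) : 0 < s -> 0 <= c ->
  (normal_prob m s [set x : R | (c < `|x|)%R] <=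
    (Phi ((- c - m) / s) + (1 - Phi ((c - m) / s)))%:E)%E.
Proof.
move=> s0 c0; rewrite abs_gt_itvU measureU//=; last first.
  by apply/seteqP; split => x //= []; rewrite !in_itv/= ?andbT; lra.
rewrite EFinD; apply: leeD.
- apply: (@le_trans _ _ (normal_prob m s `]-oo, - c])).
    apply: le_measure; rewrite ?inE//.
    by apply: subitvP; rewrite subitvE /= bnd_simp.
  by rewrite normal_prob_itvNy// PhiE.
- by rewrite normal_prob_itvy normal_prob_itvNy// PhiE.
Qed.

(* Comparing densities: normal_pdf 0 1 y =
   normal_tail_const * expR (- y ^+ 2 / 4) * normal_pdf 0 (Num.sqrt 2) y. *)
Definition normal_tail_const : R := normal_peak 1 / normal_peak (Num.sqrt 2).

Lemma normal_tail_const_gt0 : 0 < normal_tail_const.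
Proof. by rewrite divr_gt0// normal_peak_gt0// gt_eqF// sqrtr_gt0. Qed.

Lemma normal_prob_le_expR (A : set R) (r : R) : measurable A ->
  (forall y, A y -> r ^+ 2 <= y ^+ 2) ->
  (normal_prob 0 1 A <= (normal_tail_const * expR (- r ^+ 2 / 4))%:E)%E.
Proof.
move=> mA Ar; have K0 := ltW normal_tail_const_gt0.
set M := normal_tail_const * expR (- r ^+ 2 / 4).
have M0 : 0 <= M by rewrite mulr_ge0 ?expR_ge0.
have pdf_le y : A y ->
    normal_pdf 0 1 y <= M * normal_pdf 0 (Num.sqrt 2) y.
  move=> Ay; rewrite !normal_pdfE ?oner_neq0 ?gt_eqF ?sqrtr_gt0//.
  rewrite /M /normal_tail_const /normal_fun !subr0 sqr_sqrtr// expr1n.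
  have pk : normal_peak (Num.sqrt (2:R)) != 0.
    by rewrite gt_eqF// normal_peak_gt0// gt_eqF// sqrtr_gt0.
  rewrite (_ : (2:R) *+ 2 = 4); last by rewrite -[4]/(2 + 2)%:R natrD.
  rewrite [leRHS](_ : _ = normal_peak 1 *
    (expR (- r ^+ 2 / 4) * expR (- y ^+ 2 / 4))); last by field.
  rewrite (_ : - y ^+ 2 / (1 *+ 2) = - y ^+ 2 / 4 + - y ^+ 2 / 4); last by field.
  rewrite expRD ler_wpM2l ?normal_peak_ge0// ler_wpM2r ?expR_ge0//.
  by rewrite ler_expR; have := Ar _ Ay; lra.
apply: (@le_trans _ _ (\int[lebesgue_measure]_(y in A)
    (M * normal_pdf 0 (Num.sqrt 2) y)%:E)%E).
  apply: ge0_le_integral => //.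
  - by move=> y _; rewrite lee_fin normal_pdf_ge0.
  - apply/measurable_EFinP; apply: measurable_funTS.
    exact: measurable_normal_pdf.
  - apply/measurable_EFinP; apply: measurable_funTS.
    by apply: measurable_funM => //; exact: measurable_normal_pdf.
under eq_integral do rewrite EFinM.
rewrite ge0_integralZl_EFin//.
- rewrite -[leRHS]mule1 lee_wpmul2l ?lee_fin//.
  exact: (probability_le1 (normal_prob 0 (Num.sqrt 2)) mA).
- by move=> y _; rewrite lee_fin normal_pdf_ge0.
- apply/measurable_EFinP; apply: measurable_funTS.
  exact: measurable_normal_pdf.
Qed.

Lemma Phi_le_expR (x : R) : x <= 0 ->
  Phi x <= normal_tail_const * expR (- x ^+ 2 / 4).
Proof.
move=> x0; rewrite -lee_fin -PhiE; apply: normal_prob_le_expR => // y /=.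
rewrite in_itv/= => yx; rewrite -sqrrN -(sqrrN y) ler_sqr ?nnegrE; lra.
Qed.

Lemma onemPhi_le_expR (x : R) : 0 <= x ->
  1 - Phi x <= normal_tail_const * expR (- x ^+ 2 / 4).
Proof.
move=> x0; rewrite -lee_fin EFinB -PhiE -normal_prob_itvy.
apply: normal_prob_le_expR => // y /=.
rewrite in_itv/= andbT => xy; rewrite ler_sqr ?nnegrE; lra.
Qed.

End standard_normal.

Section C3_integrand.
Context {R : realType}.

(* For m = c / (1 + t) these are the standardized thresholds (- c - m) / sqrt (2 m)
   and (c - m) / sqrt (2 m), so that the integrand of C3 is the bound given by
   normal_prob_abs_gt for the law N(m, 2 m). *)
Definition thresholdN (c t : R) := - (2 + t) * Num.sqrt c / Num.sqrt (2 + 2 * t).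
Definition threshold (c t : R) := t * Num.sqrt c / Num.sqrt (2 + 2 * t).
Definition C3_integrand (c t : R) := Phi (thresholdN c t) + 1 - Phi (threshold c t).

Lemma C3E (alpha : R) : C3 alpha = (\int[lebesgue_measure]_(t in `[0%R, +oo[)
  (C3_integrand (- (1/2) * ln alpha) t)%:E)%E.
Proof. by []. Qed.

Lemma C3_integrand_ge0 (c t : R) : 0 <= C3_integrand c t.
Proof.
have := Phi_ge0 (thresholdN c t); have := Phi_le1 (threshold c t).
by rewrite /C3_integrand; lra.
Qed.

Lemma threshold_monotone (c t u : R) : 0 <= c -> 0 <= t -> t <= u ->
  thresholdN c u <= thresholdN c t /\ threshold c t <= threshold c u.
Proof.
move=> c0 t0 tu.
set At := Num.sqrt (2 + 2 * t); set Au := Num.sqrt (2 + 2 * u).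
have At0 : 0 < At by rewrite sqrtr_gt0; lra.
have Au0 : 0 < Au by rewrite sqrtr_gt0; lra.
have B0 : 0 <= Num.sqrt c := sqrtr_ge0 c.
have At2 : At ^+ 2 = 2 + 2 * t by rewrite sqr_sqrtr //; lra.
have Au2 : Au ^+ 2 = 2 + 2 * u by rewrite sqr_sqrtr //; lra.
have tu2 : 0 <= (u - t) * (u + t + u * t).
  have : 0 <= u * t by apply: mulr_ge0; lra.
  by move=> ut; apply: mulr_ge0; lra.
have hN : (2 + t) * Au <= (2 + u) * At.
  rewrite -ler_sqr ?nnegrE ?mulr_ge0 //; try lra.
  by rewrite !exprMn At2 Au2; nra.
have h : t * Au <= u * At.
  rewrite -ler_sqr ?nnegrE ?mulr_ge0 //; try lra.
  by rewrite !exprMn At2 Au2; nra.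
split; rewrite /thresholdN /threshold -/At -/Au -subr_ge0.
- rewrite (_ : _ - _ = Num.sqrt c * ((2 + u) * At - (2 + t) * Au) / (At * Au)).
    by rewrite divr_ge0 ?mulr_ge0 //; lra.
  by field; rewrite !gt_eqF.
- rewrite (_ : _ - _ = Num.sqrt c * (u * At - t * Au) / (At * Au)).
    by rewrite divr_ge0 ?mulr_ge0 //; lra.
  by field; rewrite !gt_eqF.
Qed.

Lemma measurable_C3_integrand (c : R) : 0 <= c ->
  measurable_fun (`[0%R, +oo[%classic : set R) (fun t => (C3_integrand c t)%:E).
Proof.
move=> c0; apply/measurable_EFinP.
apply: (@eq_measurable_fun _ _ _ _ _ (fun t : R => C3_integrand c (Num.max 0 t))).
  by move=> t; rewrite inE /= in_itv /= andbT => t0; rewrite max_r.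
have monotone x y : x <= y -> thresholdN c (Num.max 0 y) <= thresholdN c (Num.max 0 x)
    /\ threshold c (Num.max 0 x) <= threshold c (Num.max 0 y).
  move=> xy; apply: threshold_monotone => //; first by rewrite le_max lexx.
  exact: le_max2.
apply: measurable_funB; first apply: measurable_funD => //.
- apply: nonincreasing_measurable => // x y /monotone[+ _].
  exact: Phi_nondecreasing.
- apply: nondecreasing_measurable => // x y /monotone[_].
  exact: Phi_nondecreasing.
Qed.

(* Both arguments of Phi are beyond threshold c t in absolute value, and
   threshold c t ^+ 2 >= c * (t - 1) / 2. *)
Lemma C3_integrand_le_expR (c t : R) : 0 <= c -> 0 <= t ->
  C3_integrand c t <= 2 * normal_tail_const * expR (c / 8 - c / 8 * t).
Proof.
move=> c0 t0.
have A0 : 0 < Num.sqrt (2 + 2 * t) by rewrite sqrtr_gt0; lra.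
have b0 : 0 <= threshold c t by rewrite divr_ge0 ?mulr_ge0 ?sqrtr_ge0 //; lra.
have aN0 : 0 <= - thresholdN c t - threshold c t.
  rewrite (_ : _ - _ = 2 * Num.sqrt c / Num.sqrt (2 + 2 * t)).
    by rewrite divr_ge0 ?mulr_ge0 ?sqrtr_ge0 //; lra.
  by rewrite /thresholdN /threshold; field; rewrite gt_eqF.
have a0 : thresholdN c t <= 0 by lra.
have sq : threshold c t ^+ 2 <= thresholdN c t ^+ 2.
  by rewrite -(sqrrN (thresholdN c t)) ler_sqr ?nnegrE; lra.
have b2 : threshold c t ^+ 2 = c * (t - 1) / 2 + c / (2 + 2 * t).
  rewrite /threshold expr_div_n exprMn !sqr_sqrtr; try lra.
  by field; rewrite gt_eqF //; lra.
have b2_ge : 0 <= c / (2 + 2 * t) by apply: divr_ge0; lra.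
have K0 := ltW (@normal_tail_const_gt0 R).
have ea : expR (- thresholdN c t ^+ 2 / 4) <= expR (c / 8 - c / 8 * t).
  by rewrite ler_expR; lra.
have eb : expR (- threshold c t ^+ 2 / 4) <= expR (c / 8 - c / 8 * t).
  by rewrite ler_expR; lra.
have := ler_wpM2l K0 ea; have := ler_wpM2l K0 eb.
have := Phi_le_expR _ a0; have := onemPhi_le_expR _ b0.
rewrite /C3_integrand; lra.
Qed.

Lemma C3_integrand_integral_lty (c : R) : 0 < c ->
  (\int[lebesgue_measure]_(t in `[0%R, +oo[) (C3_integrand c t)%:E < +oo)%E.
Proof.
move=> c0; set l := c / 8; have l0 : 0 < l by rewrite divr_gt0.
set M := 2 * normal_tail_const * expR l / l.
have M0 : 0 <= M.
  have K0 := ltW (@normal_tail_const_gt0 R).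
  by apply: divr_ge0 (ltW l0); apply: mulr_ge0 (expR_ge0 _); exact: mulr_ge0.
have mexp : measurable_fun setT (exponential_pdf l).
  exact: measurable_exponential_pdf.
apply: (@le_lt_trans _ _ (\int[lebesgue_measure]_(t in `[0%R, +oo[)
    (M * exponential_pdf l t)%:E)%E).
  apply: ge0_le_integral => //.
  - by move=> t _; rewrite lee_fin C3_integrand_ge0.
  - exact: measurable_C3_integrand (ltW c0).
  - by apply/measurable_EFinP; apply: measurable_funM => //; exact: measurable_funTS.
  - move=> t; rewrite /= in_itv /= andbT => t0.
    rewrite lee_fin exponential_pdfE //.
    apply: (le_trans (C3_integrand_le_expR _ _ (ltW c0) t0)).
    rewrite [leRHS](_ : _ = 2 * normal_tail_const * expR (l - l * t)) //.
    by rewrite /M expRD mulNr; field; rewrite gt_eqF.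
under eq_integral do rewrite EFinM.
rewrite ge0_integralZl_EFin//; last 2 first.
- by move=> t _; rewrite lee_fin exponential_pdf_ge0 // ltW.
- by apply/measurable_EFinP; exact: measurable_funTS.
apply: lte_mul_pinfty; rewrite ?lee_fin //.
apply: (@le_lt_trans _ _ 1%E); last exact: ltry.
rewrite -(integral_exponential_pdf l0); apply: ge0_subset_integral => //.
- by apply/measurable_EFinP.
- by move=> t _; rewrite lee_fin exponential_pdf_ge0 // ltW.
Qed.

End C3_integrand.

Section gauss_law_tail.
Context {R : realType}.

Lemma normal_tail_le_C3_integrand (c m t : R) :
  0 < c -> 0 < m -> 0 <= t -> m * (1 + t) <= c ->
  Phi ((- c - m) / Num.sqrt (2 * m)) + (1 - Phi ((c - m) / Num.sqrt (2 * m)))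
    <= C3_integrand c t.
Proof.
move=> c0 m0 t0 mc.
set A := Num.sqrt (2 + 2 * t); set B := Num.sqrt c; set S := Num.sqrt (2 * m).
have A0 : 0 < A by rewrite sqrtr_gt0; lra.
have B0 : 0 < B by rewrite sqrtr_gt0.
have S0 : 0 < S by rewrite sqrtr_gt0; lra.
have A2 : A ^+ 2 = 2 + 2 * t by rewrite sqr_sqrtr //; lra.
have B2 : B ^+ 2 = c by rewrite sqr_sqrtr //; lra.
have S2 : S ^+ 2 = 2 * m by rewrite sqr_sqrtr //; lra.
have mc' : m <= c by nra.
have key : 0 <= (c - m * (1 + t)) * (c - m + t * c).
  have tc : 0 <= t * c by apply: mulr_ge0; lra.
  by apply: mulr_ge0; lra.
have hN : (2 + t) * B * S <= (c + m) * A.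
  rewrite -ler_sqr ?nnegrE ?mulr_ge0 //; try lra.
  by rewrite !exprMn A2 B2 S2; nra.
have h : t * B * S <= (c - m) * A.
  rewrite -ler_sqr ?nnegrE ?mulr_ge0 //; try lra.
  by rewrite !exprMn A2 B2 S2; nra.
have leN : (- c - m) / S <= thresholdN c t.
  rewrite /thresholdN -/A -/B -subr_ge0.
  rewrite [leRHS](_ : _ = ((c + m) * A - (2 + t) * B * S) / (S * A)).
    by rewrite divr_ge0 ?mulr_ge0 //; lra.
  by field; rewrite !gt_eqF.
have le : threshold c t <= (c - m) / S.
  rewrite /threshold -/A -/B -subr_ge0.
  rewrite [leRHS](_ : _ = ((c - m) * A - t * B * S) / (S * A)).
    by rewrite divr_ge0 ?mulr_ge0 //; lra.
  by field; rewrite !gt_eqF.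
have := Phi_nondecreasing _ _ leN; have := Phi_nondecreasing _ _ le.
rewrite /C3_integrand; lra.
Qed.

Lemma gauss_law_abs_gt_le (c m t : R) :
  0 < c -> 0 <= m -> 0 <= t -> m * (1 + t) <= c ->
  (gauss_law m (2 * m) [set x : R | (c < `|x|)%R] <= (C3_integrand c t)%:E)%E.
Proof.
move=> c0 m0 t0 mc; rewrite /gauss_law.
have [->|m_neq0] := eqVneq m 0.
  rewrite mulr0 eqxx indicE (_ : (0:R) \in _ = false) ?lee_fin ?C3_integrand_ge0 //.
  by apply/negbTE/negP => /set_mem /=; rewrite normr0; lra.
have m_gt0 : 0 < m by rewrite lt_neqAle eq_sym m_neq0.
rewrite gt_eqF; last lra.
have s_gt0 : 0 < Num.sqrt (2 * m) by rewrite sqrtr_gt0; lra.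
apply: le_trans (normal_prob_abs_gt _ _ _ s_gt0 (ltW c0)) _.
by rewrite lee_fin normal_tail_le_C3_integrand.
Qed.

End gauss_law_tail.

Lemma integral_nneseries_indic d (T : measurableType d) (R : realType)
    (mu : {measure set T -> \bar R}) (A : nat -> set T) :
  (forall n, measurable (A n)) ->
  (\int[mu]_x (\sum_(n <oo) (\1_(A n) x)%:E) = \sum_(n <oo) mu (A n))%E.
Proof.
move=> mA; rewrite integral_nneseries //.
  by apply: eq_eseriesr => n _; rewrite integral_indic // setIT.
by move=> n; apply/measurable_EFinP; exact: measurable_indic.
Qed.

Lemma expected_count_abs_gt d (T : measurableType d) (R : realType)
    (P : probability T R) (z : nat -> T -> R) (c : R) :
  (forall i, (1 <= i)%N -> measurable_fun setT (z i)) ->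
  (\int[P]_w (\sum_(1 <= i <oo) ((c < `|z i w|)%R%:R)%:E) =
    \sum_(n <oo) P (z n.+1 @^-1` [set x | (c < `|x|)%R]))%E.
Proof.
move=> mz; set A := [set x | (c < `|x|)%R].
have mA : measurable A := measurable_abs_gt c.
rewrite -integral_nneseries_indic; last first.
  by move=> n; rewrite -[X in measurable X]setTI; exact: mz.
apply: eq_integral => w _; apply/esym.
transitivity (\big[+%E/0%E]_(0 <= n <oo) ((c < `|z (n + 1)%N w|)%R%:R : R)%:E).
  by apply: eq_eseriesr => n _; rewrite addn1 indicE /in_mem /= /in_set asboolb.
by apply: (@nneseries_addn R (fun i => ((c < `|z i w|)%R%:R)%:E) 1) => i; rewrite lee_fin.
Qed.

Section nneseries_le_integral.
Context {R : realType}.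
Local Open Scope ereal_scope.

Lemma le_integral_itv_cst (a b : R) (y : \bar R) (f : R -> \bar R) :
  (a <= b)%R -> 0 <= y -> measurable_fun `[a, b[ f ->
  (forall t, (a <= t < b)%R -> y <= f t) ->
  (b - a)%:E * y <= \int[lebesgue_measure]_(t in `[a, b[) f t.
Proof.
move=> ab y0 mf yf.
have -> : (b - a)%:E = lebesgue_measure `[a, b[%classic.
  rewrite lebesgue_measure_itv /= lte_fin; case: ltgtP ab => // -> _.
  by rewrite subrr.
by rewrite muleC -integral_cst //; apply: ge0_le_integral.
Qed.

Lemma trivIset_itv_nat (K : R) : (0 < K)%R ->
  trivIset setT (fun n : nat => `[(n%:R / K)%R, (n.+1%:R / K)%R[%classic).
Proof.
move=> K0 i j _ _ [t []]; rewrite /= !in_itv /= !ler_pdivrMr // !ltr_pdivlMr //.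
move=> /andP[it ti] /andP[jt tj].
have ij : (i <= j)%N by rewrite -ltnS -(ltr_nat R); exact: le_lt_trans it tj.
have ji : (j <= i)%N by rewrite -ltnS -(ltr_nat R); exact: le_lt_trans jt ti.
by apply/eqP; rewrite eqn_leq ij ji.
Qed.

(* The [n]th term is paid for by the integral of [f] over the interval
   [[n / K, (n + 1) / K[] of length [1 / K]. *)
Lemma nneseries_le_integral (K : R) (a : nat -> \bar R) (f : R -> \bar R) :
  (0 < K)%R -> measurable_fun (`[0%R, +oo[%classic : set R) f ->
  (forall t, (0 <= t)%R -> 0 <= f t) -> (forall n, 0 <= a n) ->
  (forall n t, (n%:R <= t * K < n.+1%:R)%R -> a n <= f t) ->
  \sum_(n <oo) a n <= K%:E * \int[lebesgue_measure]_(t in `[0%R, +oo[) f t.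
Proof.
move=> K0 mf f0 a0 af.
pose S n : set R := `[(n%:R / K)%R, (n.+1%:R / K)%R[%classic.
have mS n : measurable (S n) by exact: measurable_itv.
have S_sub n : S n `<=` `[0%R, +oo[.
  move=> t; rewrite /S /= !in_itv /= andbT => /andP[+ _].
  by apply: le_trans; rewrite divr_ge0 // ltW.
have aS n : (K^-1)%:E * a n <= \int[lebesgue_measure]_(t in S n) f t.
  rewrite (_ : K^-1 = n.+1%:R / K - n%:R / K)%R; last first.
    by rewrite -addn1 natrD; field; rewrite gt_eqF.
  apply: le_integral_itv_cst => //.
  - by rewrite ler_pM2r ?invr_gt0 // ler_nat.
  - exact: measurable_funS (S_sub n) mf.
  - by move=> t; rewrite ler_pdivrMr // ltr_pdivlMr // => /af.
have -> : \sum_(n <oo) a n = K%:E * \sum_(n <oo) ((K^-1)%:E * a n).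
  by rewrite nneseriesZl // muleA -EFinM mulfV ?gt_eqF // mul1e.
rewrite lee_pmul2l ?lte_fin //.
apply: le_trans (lee_nneseries _ (fun n _ => aS n)) _.
  by move=> n _ _; rewrite mule_ge0 // lee_fin invr_ge0 ltW.
rewrite -ge0_integral_bigcup //; last 3 first.
- by apply: measurable_funS mf => // t [n _ /S_sub].
- by move=> t [n _ /S_sub]; rewrite /= in_itv /= andbT; exact: f0.
- exact: trivIset_itv_nat.
apply: ge0_subset_integral => //.
- exact: bigcup_measurable (fun n _ => mS n).
- by move=> t; rewrite /= in_itv /= andbT; exact: f0.
- by move=> t [n _ /S_sub].
Qed.

End nneseries_le_integral.

Theorem lemma1 (R : realType) (d : measure_display) (T : measurableType d)
  (P : probability T R) (alpha : R) (k : nat) (mu : nat -> R)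
  (z : nat -> T -> R) :
  0 < alpha < 1 -> (1 <= k)%N ->
  (forall i, (1 <= i)%N ->
     0 <= mu i <= (- (k%:R * ln alpha)) / (2 * (k + i)%:R)) ->
  (forall i, (1 <= i)%N -> measurable_fun setT (z i)) ->
  (forall i, (1 <= i)%N -> forall A : set R, measurable A ->
     P (z i @^-1` A) = gauss_law (mu i) (2 * mu i) A) ->
  let c := - (1/2) * ln alpha in
  (C3 alpha < +oo)%E /\
  (\int[P]_w (\sum_(1 <= i <oo) ((c < `|z i w|)%R%:R)%:E)
     <= C3 alpha * (k%:R)%:E)%E.
Proof.
move=> alpha01 k_ge1 mu_bnd mz z_law c.
have lnE : ln alpha = - 2 * c by rewrite /c; lra.
have c_gt0 : 0 < c by have := ln_lt0 alpha01; lra.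
split; first by rewrite C3E; exact: C3_integrand_integral_lty.
rewrite expected_count_abs_gt // C3E muleC; apply: nneseries_le_integral.
- by rewrite ltr0n.
- exact: measurable_C3_integrand (ltW c_gt0).
- by move=> t _; rewrite lee_fin C3_integrand_ge0.
- by move=> n; exact: measure_ge0.
move=> n t /andP[n_le_tk tk_lt]; rewrite z_law //; last exact: measurable_abs_gt.
have /andP[mu_ge0 mu_le] := mu_bnd n.+1 isT.
have k_gt0 : 0 < k%:R :> R by rewrite ltr0n.
have t_ge0 : 0 <= t by rewrite -(pmulr_lge0 _ k_gt0); exact: le_trans n_le_tk.
apply: gauss_law_abs_gt_le => //.
(* mu (n + 1) <= k c / (k + n + 1) and t k < n + 1 give mu (n + 1) (1 + t) <= c. *)
move: mu_le; rewrite lnE natrD ler_pdivlMr; last by rewrite mulr_gt0 // addr_gt0.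
by move=> mu_le; nra.
Qed.
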